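(* Let $K$ be an algebraically closed field of characteristic $p\geq 0$, $n\geq 2$, $Y=\operatorname{Spin}_{2n+2}(K)$ with maximal torus $T_Y$, Borel subgroup $B_Y\supseteq T_Y$, simple roots $\alpha_1,\ldots,\alpha_{n+1}$ and fundamental weights $\lambda_1,\ldots,\lambda_{n+1}$ (Bourbaki ordering), and Chevalley basis $\{f_\alpha,h_r,e_\alpha\}$ of $\operatorname{Lie}(Y)$ compatible with $T_Y\subseteq B_Y$. Let $X\subset Y$ be the subgroup of type $B_n$ stabilizing a non-singular $1$-space of the natural module, with $T_X\subseteq T_Y$, $B_X\subseteq B_Y$, and with $\operatorname{Lie}(X)$ the subalgebra of $\operatorname{Lie}(Y)$ generated by $e_{\alpha_r},f_{\alpha_r}$ $(1\leq r\leq n-1)$, $e_{\alpha_n}+e_{\alpha_{n+1}}$ and $f_{\alpha_n}+f_{\alpha_{n+1}}$. Let $V=L_Y(\lambda)$ with $\lambda=\sum_{r=1}^{n+1}a_r\lambda_r$ a non-zero $p$-restricted dominant weight satisfying $a_n\neq 0=a_{n+1}$, and let $v^+$ be a maximal vector of weight $\lambda$ for $B_Y$. Assume that $f_\gamma v^+\in\operatorname{Lie}(X)v^+$ for every positive root $\gamma$ of $Y$. Then $f_\gamma f_{\eta_1}\cdots f_{\eta_s}v^+\in\operatorname{Lie}(X)v^+$ for every positive root $\gamma$ of $Y$, every $s\geq 1$ and all positive roots $\eta_1,\ldots,\eta_s$ of $X$ (with respect to $T_X\subseteq B_X$).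
   Context: For a positive root $\eta$ of $X$, $f_\eta$ denotes a non-zero root vector of $\operatorname{Lie}(X)$ of $T_X$-weight $-\eta$. $\operatorname{Lie}(X)v^+$ denotes the $\operatorname{Lie}(X)$-submodule of $V$ generated by $v^+$. $p$-restricted means $0\leq a_r\leq p-1$ for all $r$ if $p>0$. *)

From HB Require Import structures.
From mathcomp Require Import all_boot all_order all_algebra.
Set Implicit Arguments. Unset Strict Implicit. Unset Printing Implicit Defensive.
Import GRing.Theory.
Local Open Scope ring_scope.

Definition subspaceP (K : pzRingType) (V : lmodType K) (W : V -> Prop) : Prop :=
  [/\ W 0, (forall u w, W u -> W w -> W (u + w)) & (forall (k : K) u, W u -> W (k *: u))].

Section ChevalleyD.
Variable n : nat.
Local Notation m := n.+1.   (* Y = Spin_{2m}, rank m = n+1 *)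

(* raw root data (i,j,s), i<j (0-based): s = false : eps_i - eps_j ;
   s = true : eps_i + eps_j *)
Definition rawroot := ('I_m * 'I_m * bool)%type.
Definition PRY := {t : rawroot | (t.1.1 < t.1.2)%N}.
(* index set of the Chevalley basis : e_gamma, f_gamma (gamma > 0), h_r *)
Definition BY := (PRY + PRY + 'I_m)%type.

(* natural module K^{2m} with basis e_1..e_m, e_{-1}..e_{-m} and quadratic form
   sum x_i x_{-i} *)
Definition posi (i : 'I_m) : 'I_(m + m) := lshift m i.
Definition negi (i : 'I_m) : 'I_(m + m) := rshift m i.

Definition emat (t : rawroot) : 'M[int]_(m + m) :=
  let: (i, j, s) := t in
  if s then delta_mx (posi i) (negi j) - delta_mx (posi j) (negi i)
  else delta_mx (posi i) (posi j) - delta_mx (negi j) (negi i).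
Definition fmat (t : rawroot) : 'M[int]_(m + m) :=
  let: (i, j, s) := t in
  if s then delta_mx (negi j) (posi i) - delta_mx (negi i) (posi j)
  else delta_mx (posi j) (posi i) - delta_mx (negi i) (negi j).

(* simple roots (Bourbaki): alpha_{r+1} = eps_r - eps_{r+1} (0-based r < n),
   alpha_{n+1} = eps_{n-1} + eps_n (0-based) *)
Definition simpleY (r : 'I_m) : rawroot :=
  if (r < n)%N then (r, inord r.+1, false) else (inord n.-1, inord n, true).

Definition commx (A B : 'M[int]_(m + m)) := A *m B - B *m A.
Definition hmat (r : 'I_m) : 'M[int]_(m + m) :=
  commx (emat (simpleY r)) (fmat (simpleY r)).

Definition matB (b : BY) : 'M[int]_(m + m) :=
  match b with
  | inl (inl g) => emat (val g)
  | inl (inr g) => fmat (val g)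
  | inr r => hmat r
  end.

(* coordinates in the Chevalley basis of an integer matrix of so_{2m}
   lying in the Z-span of the basis *)
Definition coordB (M : 'M[int]_(m + m)) (b : BY) : int :=
  match b with
  | inl (inl g) => let: (i, j, s) := val g in
      if s then M (posi i) (negi j) else M (posi i) (posi j)
  | inl (inr g) => let: (i, j, s) := val g in
      if s then M (negi j) (posi i) else M (posi j) (posi i)
  | inr r =>
      if (r.+1 < n)%N then \sum_(k < m | (k <= r)%N) M (posi k) (posi k)
      else
        let S := \sum_(k < m | (k < n)%N) M (posi k) (posi k) in
        if (r < n)%N then ((S - M (posi ord_max) (posi ord_max)) %/ 2)%Z
        else ((S + M (posi ord_max) (posi ord_max)) %/ 2)%Z
  end.

Definition structY (x y z : BY) : int := coordB (commx (matB x) (matB y)) z.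

(* Lie(Y) over K : coordinates w.r.t. the Chevalley basis *)
Definition LY (K : pzRingType) := {ffun BY -> K}.

Definition bracketY (K : pzRingType) (x y : LY K) : LY K :=
  [ffun z => \sum_a \sum_b x a * y b * (structY a b z)%:~R].

Definition eY (K : pzRingType) (t : rawroot) : LY K :=
  [ffun b => match b with inl (inl g) => (val g == t)%:R | _ => 0 end].
Definition fY (K : pzRingType) (t : rawroot) : LY K :=
  [ffun b => match b with inl (inr g) => (val g == t)%:R | _ => 0 end].

Definition genX (K : pzRingType) (g : LY K) : Prop :=
  (exists k : nat, (k.+1 < n)%N /\
     (g = eY K (inord k, inord k.+1, false) \/ g = fY K (inord k, inord k.+1, false)))
  \/ g = eY K (inord n.-1, inord n, false) + eY K (inord n.-1, inord n, true)
  \/ g = fY K (inord n.-1, inord n, false) + fY K (inord n.-1, inord n, true).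

Definition subspaceLY (K : pzRingType) (S : LY K -> Prop) : Prop :=
  [/\ S 0, (forall u w, S u -> S w -> S (u + w))
     & (forall (k : K) u, S u -> S [ffun b => k * u b])].

Definition LieX (K : pzRingType) (x : LY K) : Prop :=
  forall S : LY K -> Prop, subspaceLY S -> (forall g, genX g -> S g) ->
    (forall y z, S y -> S z -> S (bracketY y z)) -> S x.

(* weights (eps-coordinates) *)
Definition wtY (g : PRY) : {ffun 'I_m -> int} :=
  let: (i, j, s) := val g in
  [ffun k => ((k == i) : nat)%:Z + (if s then 1 else -1) * ((k == j) : nat)%:Z].
Definition wtB (b : BY) : {ffun 'I_m -> int} :=
  match b with inl (inl g) => wtY g | inl (inr g) => - wtY g | inr _ => 0 end.
(* restriction of characters from T_Y to T_X (T_X kills eps_{n+1}) *)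
Definition resX (w : {ffun 'I_m -> int}) : {ffun 'I_n -> int} :=
  [ffun k => w (widen_ord (leqnSn n) k)].

(* positive roots of X = B_n : eps_i -+ eps_j (i<j), eps_i *)
Definition PRX := ({t : 'I_n * 'I_n * bool | (t.1.1 < t.1.2)%N} + 'I_n)%type.
Definition wtX (e : PRX) : {ffun 'I_n -> int} :=
  match e with
  | inl g => let: (i, j, s) := val g in
      [ffun k => ((k == i) : nat)%:Z + (if s then 1 else -1) * ((k == j) : nat)%:Z]
  | inr i => [ffun k => ((k == i) : nat)%:Z]
  end.

Definition hasTXweight (K : pzRingType) (x : LY K) (mu : {ffun 'I_n -> int}) : Prop :=
  forall b, x b != 0 -> resX (wtB b) = mu.

Definition rootvecX (K : pzRingType) (x : LY K) (eta : PRX) : Prop :=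
  [/\ LieX x, x != 0 & hasTXweight x (- wtX eta)].

Section Rep.
Variables (K : fieldType) (V : lmodType K) (rho : BY -> {linear V -> V}).

Definition act (x : LY K) (v : V) : V := \sum_b x b *: rho b v.

Definition is_rep : Prop :=
  forall (x y : LY K) (v : V),
    act (bracketY x y) v = act x (act y v) - act y (act x v).

Definition restricted_rep : Prop :=
  forall p, p \in [pchar K] -> forall v : V,
    (forall g, iter p (rho (inl (inl g))) v = 0 /\ iter p (rho (inl (inr g))) v = 0)
    /\ (forall r, iter p (rho (inr r)) v = rho (inr r) v).

Definition irreducible_rep : Prop :=
  forall W : V -> Prop, subspaceP W -> (forall b w, W w -> W (rho b w)) ->
    (exists w, W w /\ w != 0) -> forall v, W v.

Definition LXv (vp v : V) : Prop :=
  forall W : V -> Prop, subspaceP W -> W vp ->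
    (forall x w, LieX x -> W w -> W (act x w)) -> W v.
End Rep.

End ChevalleyD.

(** Every root vector of Lie(X) of weight [-eta], [eta] a positive root of
    [X], lies in the span n^- of the negative root vectors [f_gamma] of [Y]:
    restricted to [T_X], the weights of the [e_gamma] and of the [h_r] are
    lexicographically non-negative, whereas [-eta] is lexicographically
    negative. Moreover n^- is a subalgebra, since its matrices are strictly
    lower triangular for a suitable ordering of the basis of the natural
    module. Writing [f_gamma x w = [f_gamma, x] w + x f_gamma w] with
    [[f_gamma, x]] in n^-, induction on the number of factors concludes; of
    the hypotheses on [V] and [v^+] only [is_rep] and [Hf] are needed. *)
From HB Require Import structures.
From mathcomp Require Import all_boot all_order all_algebra zify.
Set Implicit Arguments. Unset Strict Implicit. Unset Printing Implicit Defensive.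
Import Order.TTheory GRing.Theory Num.Theory.
Local Open Scope ring_scope.

Definition strictly_lower (R : pzSemiRingType) (k : nat) (rk : 'I_k -> nat)
    (M : 'M[R]_k) :=
  forall r c, (rk r <= rk c)%N -> M r c = 0.

Section StrictlyLower.
Variables (R : pzSemiRingType) (k : nat) (rk : 'I_k -> nat).

Lemma delta_mx_strictly_lower (a b : 'I_k) :
  (rk b < rk a)%N -> strictly_lower rk (delta_mx a b : 'M[R]_k).
Proof. by move=> hab r c hrc; rewrite mxE; do 2 case: eqP => [?|] //=; subst; lia. Qed.

Lemma mulmx_strictly_lower (A B : 'M[R]_k) :
  strictly_lower rk A -> strictly_lower rk B -> strictly_lower rk (A *m B).
Proof.
move=> hA hB r c hrc; rewrite mxE; apply: big1 => i _.
have [hri | hir] := leqP (rk r) (rk i); first by rewrite hA ?mul0r.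
by rewrite hB ?mulr0 //; lia.
Qed.

End StrictlyLower.

Lemma strictly_lowerB (R : pzRingType) k (rk : 'I_k -> nat) (A B : 'M[R]_k) :
  strictly_lower rk A -> strictly_lower rk B -> strictly_lower rk (A - B).
Proof. by move=> hA hB r c hrc; rewrite !mxE hA ?hB ?subr0. Qed.

Definition lex_pos k (w : {ffun 'I_k -> int}) :=
  exists i : 'I_k, 0 < w i /\ forall j : 'I_k, (j < i)%N -> w j = 0.

Lemma lex_pos_oppN k (w : {ffun 'I_k -> int}) : lex_pos w -> ~ lex_pos (- w).
Proof.
move=> [i [wi_gt0 wi0]] [j []]; rewrite ffunE oppr_gt0 => wj_lt0 wj0.
case: (ltngtP i j) => [lt_ij | lt_ji | /val_inj eq_ij].
- by move: (wj0 i lt_ij); rewrite ffunE => /eqP; rewrite oppr_eq0 (gt_eqF wi_gt0).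
- by rewrite wi0 in wj_lt0.
- by subst; rewrite ltNge ltW in wj_lt0.
Qed.

Lemma lex_pos0 k : ~ lex_pos (0 : {ffun 'I_k -> int}).
Proof. by move=> [i []]; rewrite ffunE. Qed.

Section ChevalleyBasis.
Variable n : nat.
Local Notation m := n.+1.

(* Position of a basis vector of the natural module in the order
   e_1, ..., e_m, e_{-m}, ..., e_{-1}. *)
Definition basis_rank (k : 'I_(m + m)) : nat :=
  if (k < m)%N then val k else (m + m + m - val k)%N.

Lemma basis_rank_pos (i : 'I_m) : basis_rank (posi i) = i.
Proof. by rewrite /basis_rank /= ltn_ord. Qed.

Lemma basis_rank_neg (i : 'I_m) : basis_rank (negi i) = (m + m - i)%N.
Proof. by rewrite /basis_rank /=; have := ltn_ord i; case: ifP; lia. Qed.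

Lemma fmat_strictly_lower (g : PRY n) : strictly_lower basis_rank (fmat (val g)).
Proof.
case: g => [[[i j] s]] /= lt_ij; have := ltn_ord j.
by case: s => ?; apply: strictly_lowerB; apply: delta_mx_strictly_lower;
  rewrite ?basis_rank_pos ?basis_rank_neg; lia.
Qed.

Lemma commx_strictly_lower (A B : 'M[int]_(m + m)) :
  strictly_lower basis_rank A -> strictly_lower basis_rank B ->
  strictly_lower basis_rank (commx A B).
Proof. by move=> hA hB; apply: strictly_lowerB; apply: mulmx_strictly_lower. Qed.

Definition is_fY (b : BY n) : bool := if b is inl (inr _) then true else false.

Lemma coordB_strictly_lower (M : 'M[int]_(m + m)) (z : BY n) :
  strictly_lower basis_rank M -> ~~ is_fY z -> coordB M z = 0.
Proof.
move=> hM; case: z => [[g | //] | r] _ /=.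
  case: g => [[[i j] s] /= lt_ij].
  by have := ltn_ord j; case: s => ?; rewrite hM ?basis_rank_pos ?basis_rank_neg //; lia.
have diag0 (P : pred 'I_m) : \sum_(k < m | P k) M (posi k) (posi k) = 0.
  by apply: big1 => k _; rewrite hM.
by rewrite !diag0 hM ?basis_rank_pos //; case: ifP => _ //; case: ifP.
Qed.

Lemma structY_ff (g1 g2 : PRY n) (z : BY n) :
  ~~ is_fY z -> structY (inl (inr g1)) (inl (inr g2)) z = 0.
Proof.
move=> hz; apply: coordB_strictly_lower => //.
by apply: commx_strictly_lower; apply: fmat_strictly_lower.
Qed.

Lemma lex_pos_wtX (eta : PRX n) : lex_pos (wtX eta).
Proof.
case: eta => [[[[i j] s] /= lt_ij] | i].
  exists i; rewrite ffunE eqxx (_ : (i == j) = false);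
    last by apply/eqP => /(congr1 val) /=; lia.
  split=> [| k lt_ki]; first by rewrite mulr0 addr0.
  by rewrite ffunE; do 2 case: eqP => [?|] //=; subst; lia.
exists i; rewrite ffunE eqxx; split=> // k lt_ki.
by rewrite ffunE; case: eqP => [?|] //; subst; lia.
Qed.

Lemma lex_pos_resX_wtY (g : PRY n) : lex_pos (resX (wtY g)).
Proof.
case: g => [[[i j] s] /= lt_ij].
have lt_in : (i < n)%N by have := ltn_ord j; lia.
exists (Ordinal lt_in); rewrite !ffunE -!(inj_eq val_inj) /= eqxx.
rewrite (_ : (i == j :> nat) = false); last by lia.
split=> [| k lt_ki]; first by rewrite mulr0 addr0.
by rewrite !ffunE -!(inj_eq val_inj) /=; do 2 case: eqP => [?|] //=; lia.
Qed.

Lemma neg_rootX_weight_is_fY (b : BY n) (eta : PRX n) :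
  resX (wtB b) = - wtX eta -> is_fY b.
Proof.
have := lex_pos_wtX eta; case: b => [[g | //] | r] /= posX E.
  by case: (lex_pos_oppN posX); rewrite -E; apply: lex_pos_resX_wtY.
have X0 : wtX eta = 0.
  by rewrite -[wtX eta]opprK -E; apply/ffunP => k; rewrite !ffunE oppr0.
by case: (lex_pos0 (k := n)); rewrite -X0.
Qed.

Section Nminus.
Variable K : pzRingType.

Definition in_nminus (x : LY n K) := forall b, ~~ is_fY b -> x b = 0.

Lemma fY_nminus (t : rawroot n) : in_nminus (fY K t).
Proof. by case=> [[g | //] | r] _; rewrite ffunE. Qed.

Lemma bracketY_nminus (x y : LY n K) :
  in_nminus x -> in_nminus y -> in_nminus (bracketY x y).
Proof.
move=> hx hy z hz; rewrite ffunE; apply: big1 => a _; apply: big1 => b _.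
case: a => [[a | a] | a]; try by rewrite hx ?mul0r.
case: b => [[b | b] | b]; try by rewrite hy ?mulr0 ?mul0r.
by rewrite structY_ff // mulr0z mulr0.
Qed.

Lemma neg_rootX_nminus (x : LY n K) (eta : PRX n) :
  hasTXweight x (- wtX eta) -> in_nminus x.
Proof.
move=> wx b; apply: contraNeq => /wx.
by move/neg_rootX_weight_is_fY ->.
Qed.

End Nminus.

Section Rep.
Variables (K : fieldType) (V : lmodType K) (rho : BY n -> {linear V -> V}) (vp : V).
Hypothesis rep : is_rep rho.

Local Notation LXv := (LXv rho vp).

Lemma LXv0 : LXv 0.
Proof. by move=> W [W0 _ _]. Qed.

Lemma LXvD u w : LXv u -> LXv w -> LXv (u + w).
Proof.
by move=> hu hw W hW Wvp Wact; case: (hW) => _ WD _; apply: WD; [apply: hu | apply: hw].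
Qed.

Lemma LXvZ k u : LXv u -> LXv (k *: u).
Proof. by move=> hu W hW Wvp Wact; case: (hW) => _ _ WZ; apply: WZ; apply: hu. Qed.

Lemma LXv_act x w : LieX x -> LXv w -> LXv (act rho x w).
Proof. by move=> hx hw W hW Wvp Wact; apply: (Wact) => //; apply: hw. Qed.

Lemma act_fY (g : PRY n) v : act rho (fY K (val g)) v = rho (inl (inr g)) v.
Proof.
rewrite /act (bigD1 (inl (inr g))) //= big1 ?addr0 ?ffunE ?eqxx ?scale1r //.
move=> [[h | h] | r] hb; rewrite ffunE ?scale0r //.
have : h != g by apply: contraNneq hb => ->.
by rewrite -(inj_eq val_inj) => /negbTE ->; rewrite scale0r.
Qed.

Lemma act_nminus_LXv y w :
  (forall g, LXv (rho (inl (inr g)) w)) -> in_nminus y -> LXv (act rho y w).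
Proof.
move=> fw hy; apply: (big_ind LXv LXv0 LXvD) => -[[b | b] | b] _;
  try by rewrite hy // scale0r; apply: LXv0.
exact: LXvZ.
Qed.

Lemma LXv_fY_act x w :
  LieX x -> in_nminus x -> (forall g, LXv (rho (inl (inr g)) w)) ->
  forall g, LXv (rho (inl (inr g)) (act rho x w)).
Proof.
move=> Xx nx fw g; rewrite -act_fY.
have -> : act rho (fY K (val g)) (act rho x w) =
    act rho (bracketY (fY K (val g)) x) w + act rho x (act rho (fY K (val g)) w).
  by rewrite rep subrK.
apply: LXvD.
  by apply: act_nminus_LXv => //; apply: bracketY_nminus => //; apply: fY_nminus.
by apply: LXv_act => //; rewrite act_fY.
Qed.

Lemma LXv_fY_foldr_act (s : seq (LY n K)) :
  (forall g, LXv (rho (inl (inr g)) vp)) ->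
  (forall x, x \in s -> LieX x /\ in_nminus x) ->
  forall g, LXv (rho (inl (inr g)) (foldr (act rho) vp s)).
Proof.
move=> fvp; elim: s => [// | x s IH] hs /=.
have [Xx nx] := hs x (mem_head x s).
by apply: LXv_fY_act => //; apply: IH => y ys; apply: hs; rewrite in_cons ys orbT.
Qed.

End Rep.
End ChevalleyBasis.

Theorem lemma3p4 (K : closedFieldType) (n : nat) (hn : (2 <= n)%N)
  (V : vectType K) (rho : BY n -> {linear V -> V})
  (Hrep : is_rep rho) (Hres : restricted_rep rho) (Hirr : irreducible_rep rho)
  (a : 'I_n.+1 -> nat)
  (Hpres : forall p, p \in [pchar K] -> forall r, (a r < p)%N)
  (Han : a (inord n.-1) <> 0%N) (Han1 : a ord_max = 0%N)
  (vp : V) (Hvp0 : vp != 0)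
  (Hvpe : forall g, rho (inl (inl g)) vp = 0)
  (Hvph : forall r, rho (inr r) vp = (a r)%:R *: vp)
  (Hf : forall g, LXv rho vp (rho (inl (inr g)) vp)) :
  forall (g : PRY n) (s : seq (LY n K)),
    (1 <= size s)%N ->
    (forall x, x \in s -> exists eta : PRX n, rootvecX x eta) ->
    LXv rho vp (rho (inl (inr g)) (foldr (act rho) vp s)).
Proof.
move=> g s _ hs; apply: LXv_fY_foldr_act => // x /hs [eta [Xx _ wx]].
by split=> //; apply: neg_rootX_nminus wx.
Qed.
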